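(* Let $i\ge 1$ be an integer and $k\ge 10i+15$. Let $H$ be a weighted graph with edge weight $\omega:E(H)\to\{3,4,5\}$ which contains no cycle of odd weight smaller than $2k+1$. If $P$ is a path in $H$ of minimal weight among all paths between its two end-vertices, then $N^i[P]$ is weighted bipartite.
   Context: The weight of a subgraph is the sum of the weights of its edges. $N^i[P]$ is the closed unweighted $i$-th neighbourhood of $V(P)$: the set of vertices at (unweighted) graph distance at most $i$ from some vertex of $P$. A vertex set $S$ is weighted bipartite if the induced subgraph $H[S]$ contains no cycle of odd weight. *)

From mathcomp Require Import all_boot.
Set Implicit Arguments. Unset Strict Implicit. Unset Printing Implicit Defensive.

(* A finite simple graph on vertex type T: symmetric irreflexive relation e.
   Edge weights: w : T -> T -> nat (only its values on edges matter). *)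

Definition simple_graph (T : finType) (e : rel T) : Prop :=
  irreflexive e /\ symmetric e.

Definition is_path (T : finType) (e : rel T) (x : T) (p : seq T) : bool :=
  path e x p && uniq (x :: p).

Definition path_weight (T : finType) (w : T -> T -> nat) (x : T) (p : seq T) : nat :=
  sumn (pairmap w x p).

Definition is_cycle (T : finType) (e : rel T) (c : seq T) : bool :=
  [&& 3 <= size c, uniq c & cycle e c].

Definition cycle_weight (T : finType) (w : T -> T -> nat) (c : seq T) : nat :=
  if c is x :: p then sumn (pairmap w x (rcons p x)) else 0.

(* closed unweighted i-th neighbourhood of the vertex set of the path x :: p *)
Definition closed_nbhd (T : finType) (e : rel T) (i : nat) (x : T) (p : seq T)
  : pred T :=
  fun v => [exists u in x :: p, exists n : 'I_i.+1,
              exists s : n.-tuple T, path e u s && (last u s == v)].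

Definition weighted_bipartite (T : finType) (e : rel T) (w : T -> T -> nat)
  (S : pred T) : Prop :=
  forall c : seq T, is_cycle e c -> all S c -> ~~ odd (cycle_weight w c).

From mathcomp Require Import all_boot zify.
Set Implicit Arguments. Unset Strict Implicit. Unset Printing Implicit Defensive.

(* Give every vertex v of N^i[P] a potential: the weight of P from its start x
   to some vertex a of P, plus the weight of a walk of at most i edges from a
   to v.  For an edge uv of N^i[P] whose anchors a, b appear in this order on
   P, consider the closed walk going from a along P to b, out to v, across to
   u and back to a.  As P is shortest, its segment from a to b weighs at most
   the detour through u and v, so the closed walk weighs at most
   2 * 5 * (2i + 1) < 2k + 1; since every odd closed walk contains an odd
   cycle of no larger weight, it is even.  Thus w(uv) has the parity of the
   sum of the potentials of u and v, and summing along any cycle of N^i[P]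
   yields an even weight. *)

Lemma odd_add_double a d : odd (a + d.*2) = odd a.
Proof. by rewrite oddD odd_double addbF. Qed.

Section Walks.

Variables (T : finType) (e : rel T) (w : T -> T -> nat).

Lemma mem_last_take (x u : T) (p : seq T) :
  u \in x :: p -> exists j, last x (take j p) = u.
Proof.
rewrite in_cons => /predU1P[->|u_p]; first by exists 0; rewrite take0.
by exists (index u p).+1; rewrite (take_nth u) ?index_mem // last_rcons nth_index.
Qed.

Lemma not_uniq_closed_subwalk (x : T) (s : seq T) :
  ~~ uniq (x :: s) ->
  exists s1 s2 s3, [/\ s = s1 ++ s2 ++ s3, s2 != [::] &
                       last (last x s1) s2 = last x s1].
Proof.
elim: s x => [|a s IH] x //; rewrite cons_uniq negb_and negbK.
case/orP=> [/splitPr[s1 s3]|/IH[s1 [s2 [s3 [-> ne2 loop2]]]]].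
  exists [::], (rcons s1 x), s3; split=> //; last by rewrite last_rcons.
  - by rewrite cat_rcons.
  - by case: s1.
by exists (a :: s1), s2, s3.
Qed.

Lemma path_weight_cat x s1 s2 :
  path_weight w x (s1 ++ s2) =
  path_weight w x s1 + path_weight w (last x s1) s2.
Proof. by rewrite /path_weight pairmap_cat sumn_cat. Qed.

Lemma path_weight_cons x y s :
  path_weight w x (y :: s) = w x y + path_weight w y s.
Proof. by []. Qed.

Lemma path_weight_le W y s :
  (forall a b, e a b -> w a b <= W) ->
  path e y s -> path_weight w y s <= W * size s.
Proof.
move=> w_le; elim: s y => [|z s IH] y //= /andP[e_yz p_zs].
by rewrite path_weight_cons mulnS leq_add ?w_le ?IH.
Qed.

Lemma last_rev_belast (x : T) s : last (last x s) (rev (belast x s)) = x.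
Proof. by case: s => //= y s; rewrite rev_cons last_rcons. Qed.

Hypothesis e_sym : symmetric e.
Hypothesis w_sym : forall a b, e a b -> w a b = w b a.

Lemma rev_walk_path x s : path e x s -> path e (last x s) (rev (belast x s)).
Proof. by rewrite rev_path; apply: sub_path => a b; rewrite e_sym. Qed.

Lemma path_weight_rev x s :
  path e x s -> path_weight w (last x s) (rev (belast x s)) = path_weight w x s.
Proof.
elim: s x => //= y s IH x /andP[e_xy p_ys].
rewrite rev_cons -cats1 path_weight_cat IH // last_rev_belast.
by rewrite /path_weight /= addn0 (w_sym e_xy) addnC.
Qed.

Lemma shorten_walk y s : path e y s ->
  exists q, [/\ is_path e y q, last y q = last y s &
                path_weight w y q <= path_weight w y s].
Proof.
have [n] := ubnP (size s); elim: n s => // n IH s /ltnSE sz_s p_s.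
have [U|/not_uniq_closed_subwalk[s1 [s2 [s3 [def_s ne2 loop2]]]]] :=
  boolP (uniq (y :: s)).
  by exists s; rewrite /is_path p_s U.
have p_s13 : path e y (s1 ++ s3).
  by move: p_s; rewrite def_s !cat_path loop2 => /and3P[-> _ ->].
have size_s2 : 0 < size s2 by rewrite lt0n size_eq0.
have [|q [p_q l_q w_q]] := IH (s1 ++ s3) _ p_s13.
  by move: sz_s; rewrite def_s !size_cat; lia.
exists q; split=> //; first by rewrite l_q def_s !last_cat loop2.
by apply: (leq_trans w_q); rewrite def_s !path_weight_cat loop2; lia.
Qed.

Hypothesis e_irr : irreflexive e.

Lemma simple_odd_closed_walk_cycle y s :
  path e y (rcons s y) -> uniq (y :: s) -> odd (path_weight w y (rcons s y)) ->
  is_cycle e (y :: s).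
Proof.
case: s => [|a [|b s]] /=; first by rewrite e_irr.
  move=> /andP[e_ya _] _; rewrite /path_weight /= addn0 -(w_sym e_ya).
  by rewrite addnn odd_double.
by move=> p_c U _; apply/and3P; split.
Qed.

Lemma odd_closed_walk_cycle y s :
  path e y s -> last y s = y -> odd (path_weight w y s) ->
  exists c, [/\ is_cycle e c, odd (cycle_weight w c) &
                cycle_weight w c <= path_weight w y s].
Proof.
have [n] := ubnP (size s); elim: n y s => // n IH y s /ltnSE sz_s.
case/lastP: s sz_s => [|s y'] // sz_s p_s; rewrite last_rcons => def_y'.
rewrite {y'}def_y' in sz_s p_s * => odd_s.
have [U|/not_uniq_closed_subwalk[s1 [s2 [s3 [def_s ne2 loop2]]]]] :=
  boolP (uniq (y :: s)).
  by exists (y :: s); rewrite simple_odd_closed_walk_cycle.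
set z := last y s1 in loop2.
have weight_s : path_weight w y (rcons s y) =
    path_weight w z s2 + path_weight w y (s1 ++ rcons s3 y).
  by rewrite def_s !rcons_cat !path_weight_cat -/z loop2; lia.
rewrite def_s !rcons_cat !cat_path -/z loop2 in p_s.
case/and3P: p_s => p_s1 p_s2 p_s3.
have size_s : size s = size s1 + size s2 + size s3.
  by rewrite def_s !size_cat addnA.
have size_s2 : 0 < size s2 by rewrite lt0n size_eq0.
have [odd_s2|even_s2] := boolP (odd (path_weight w z s2)).
  have [|c [cyc_c odd_c w_c]] := IH z s2 _ p_s2 loop2 odd_s2.
    by rewrite size_rcons in sz_s; lia.
  by exists c; split=> //; rewrite weight_s (leq_trans w_c) ?leq_addr.
have [||||c [cyc_c odd_c w_c]] := IH y (s1 ++ rcons s3 y).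
- by rewrite size_cat size_rcons; rewrite size_rcons in sz_s; lia.
- by rewrite cat_path p_s1 -/z p_s3.
- by rewrite last_cat last_rcons.
- by move: odd_s; rewrite weight_s oddD (negbTE even_s2).
by exists c; split=> //; rewrite weight_s (leq_trans w_c) ?leq_addl.
Qed.

Variables (x : T) (p : seq T).
Hypothesis p_path : path e x p.
Hypothesis p_shortest : forall q, is_path e x q -> last x q = last x p ->
  path_weight w x p <= path_weight w x q.

Lemma shortest_path_segment q1 mm r2 r :
  p = q1 ++ mm ++ r2 ->
  path e (last x q1) r -> last (last x q1) r = last (last x q1) mm ->
  path_weight w (last x q1) mm <= path_weight w (last x q1) r.
Proof.
move=> def_p p_r l_r.
have p_detour : path e x (q1 ++ r ++ r2).
  by move: p_path; rewrite def_p !cat_path l_r p_r => /and3P[-> _ ->].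
have [q [p_q l_q w_q]] := shorten_walk p_detour.
have := p_shortest p_q; rewrite l_q def_p !last_cat l_r => /(_ erefl) opt.
by move: (leq_trans opt w_q); rewrite !path_weight_cat l_r; lia.
Qed.

Variables (i W : nat).
Hypothesis w_le : forall a b, e a b -> w a b <= W.
Hypothesis long_odd_cycles : forall c, is_cycle e c -> odd (cycle_weight w c) ->
  2 * W * (2 * i + 1) < cycle_weight w c.

Lemma detour_closed_walk_even q1 mm r2 s t :
  p = q1 ++ mm ++ r2 ->
  path e (last x q1) s -> size s <= i ->
  path e (last x (q1 ++ mm)) t -> size t <= i ->
  e (last (last x q1) s) (last (last x (q1 ++ mm)) t) ->
  ~~ odd (path_weight w (last x q1) mm + path_weight w (last x (q1 ++ mm)) t +
          w (last (last x q1) s) (last (last x (q1 ++ mm)) t) +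
          path_weight w (last x q1) s).
Proof.
rewrite last_cat; set a := last x q1; set b := last a mm.
set u := last a s; set v := last b t => def_p p_s sz_s p_t sz_t e_uv.
have p_mm : path e a mm by move: p_path; rewrite def_p !cat_path => /and3P[].
have segment_le :
    path_weight w a mm <= path_weight w a s + w u v + path_weight w b t.
  have p_detour : path e a (s ++ v :: rev (belast b t)).
    by rewrite cat_path p_s /= e_uv rev_walk_path.
  have := shortest_path_segment def_p p_detour.
  rewrite last_cat /= last_rev_belast path_weight_cat path_weight_cons.
  by rewrite path_weight_rev // => /(_ erefl); rewrite addnA.
set C := mm ++ t ++ u :: rev (belast a s).
have p_C : path e a C.
  by rewrite cat_path p_mm cat_path p_t /= e_sym e_uv rev_walk_path.
have l_C : last a C = a by rewrite !last_cat /= last_rev_belast.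
have w_C : path_weight w a C =
    path_weight w a mm + path_weight w b t + w u v + path_weight w a s.
  rewrite !path_weight_cat path_weight_cons path_weight_rev // -/b -/v.
  by rewrite -(w_sym e_uv); lia.
apply/negP; rewrite -w_C => odd_C.
have [c [cyc_c odd_c w_c]] := odd_closed_walk_cycle p_C l_C odd_C.
have := long_odd_cycles cyc_c odd_c.
have := leq_trans (path_weight_le w_le p_s) (leq_mul (leqnn W) sz_s).
have := leq_trans (path_weight_le w_le p_t) (leq_mul (leqnn W) sz_t).
have := w_le e_uv.
move: w_c segment_le; rewrite w_C; nia.
Qed.

Definition potential (v : T) (n : nat) : Prop :=
  exists j s, [/\ path e (last x (take j p)) s, last (last x (take j p)) s = v,
                  size s <= i &
                  n = path_weight w x (take j p) + path_weight w (last x (take j p)) s].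

Lemma closed_nbhd_potential v : closed_nbhd e i x p v -> exists n, potential v n.
Proof.
case/existsP=> u /andP[/mem_last_take[j l_j] /existsP[n /existsP[s /andP[p_s l_s]]]].
exists (path_weight w x (take j p) + path_weight w u s), j, s.
by rewrite l_j size_tuple -ltnS ltn_ord; split=> //; apply/eqP.
Qed.

Lemma potential_edge_even u v m n :
  potential u m -> potential v n -> e u v -> ~~ odd (w u v + m + n).
Proof.
move=> [j1 [s [p_s <- sz_s ->]]] [j2 [t [p_t <- sz_t ->]]].
wlog le_j : j1 j2 s t p_s sz_s p_t sz_t / j1 <= j2 => [hyp|] e_uv.
  have [|/ltnW le_j] := leqP j1 j2; first by move=> le_j; exact: hyp.
  by rewrite w_sym // addnAC; apply: hyp; rewrite // e_sym.
set q1 := take j1 p; set mm := drop j1 (take j2 p).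
have take_j2 : take j2 p = q1 ++ mm.
  by rewrite /q1 /mm -(take_takel p le_j) cat_take_drop.
have def_p : p = q1 ++ mm ++ drop j2 p by rewrite catA -take_j2 cat_take_drop.
rewrite take_j2 in p_t e_uv *.
have := detour_closed_walk_even def_p p_s sz_s p_t sz_t e_uv.
rewrite path_weight_cat => even_C.
rewrite (_ : _ + _ + _ = path_weight w (last x q1) mm +
  path_weight w (last x (q1 ++ mm)) t +
  w (last (last x q1) s) (last (last x (q1 ++ mm)) t) +
  path_weight w (last x q1) s + (path_weight w x q1).*2).
  by rewrite odd_add_double.
by rewrite last_cat -addnn; lia.
Qed.

Lemma walk_potential_parity y s m :
  path e y s -> all (closed_nbhd e i x p) s -> potential y m ->
  exists2 n, potential (last y s) n & ~~ odd (path_weight w y s + m + n).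
Proof.
elim: s y m => [|z s IH] y m /=.
  by move=> _ _ pot_y; exists m; rewrite // addnn odd_double.
move=> /andP[e_yz p_zs] /andP[N_z N_s] pot_y.
have [m' pot_z] := closed_nbhd_potential N_z.
have [n pot_n even_s] := IH z m' p_zs N_s pot_z.
exists n => //; have even_yz := potential_edge_even pot_y pot_z e_yz.
have : ~~ odd ((w y z + m + m') + (path_weight w z s + m' + n)).
  by rewrite oddD (negbTE even_yz) (negbTE even_s).
rewrite (_ : _ + _ = path_weight w y (z :: s) + m + n + m'.*2) //.
  by rewrite odd_add_double.
by rewrite path_weight_cons -addnn; lia.
Qed.

Lemma closed_nbhd_weighted_bipartite :
  weighted_bipartite e w (closed_nbhd e i x p).
Proof.
case=> [|y s] // /and3P[_ _]; rewrite /= rcons_path => /andP[p_s e_sy].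
case/andP=> N_y N_s; have [m pot_y] := closed_nbhd_potential N_y.
have [n pot_n even_s] := walk_potential_parity p_s N_s pot_y.
have even_sy := potential_edge_even pot_n pot_y e_sy.
have : ~~ odd ((path_weight w y s + m + n) + (w (last y s) y + n + m)).
  by rewrite oddD (negbTE even_s) (negbTE even_sy).
rewrite (_ : _ + _ = cycle_weight w (y :: s) + (m + n).*2) //.
  by rewrite odd_add_double.
rewrite /cycle_weight -[sumn _]/(path_weight w y (rcons s y)) -cats1.
by rewrite path_weight_cat /path_weight /= -addnn; lia.
Qed.

End Walks.

Theorem lemma4p2 (i k : nat) (T : finType) (e : rel T) (w : T -> T -> nat)
  (x : T) (p : seq T) :
  1 <= i -> 10 * i + 15 <= k ->
  simple_graph e ->
  (forall a b, e a b -> w a b = w b a) ->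
  (forall a b, e a b -> w a b \in [:: 3; 4; 5]) ->
  (forall c, is_cycle e c -> odd (cycle_weight w c) ->
     2 * k + 1 <= cycle_weight w c) ->
  is_path e x p ->
  (forall q, is_path e x q -> last x q = last x p ->
     path_weight w x p <= path_weight w x q) ->
  weighted_bipartite e w (closed_nbhd e i x p).
Proof.
move=> _ k_ge [e_irr e_sym] w_sym w345 long_odd /andP[p_path _] p_shortest.
have w_le5 a b : e a b -> w a b <= 5.
  by move/w345; rewrite !inE => /or3P[] /eqP->.
apply: (closed_nbhd_weighted_bipartite e_sym w_sym e_irr p_path p_shortest w_le5).
by move=> c cyc_c odd_c; have := long_odd c cyc_c odd_c; lia.
Qed.
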